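(* Let $\mathsf{P}_N$ be a parameterized program (in the class described in the context) with pre-condition $\varphi(N)$ and post-condition $\psi(N)$, such that for every loop $L$ of $\mathsf{P}_N$ the quantity $c_L = k_L(N) - k_L(N-1)$ is a constant (independent of $N$). Let $\mathsf{P}^p_N$ be the program obtained from $\mathsf{P}_N$ by transforming every loop $L$ as follows: its termination condition $\ell < k_L(N)$ is replaced by $\ell < k_L(N-1)$, and the last $c_L$ iterations of $L$ are peeled, i.e. $c_L$ unrolled copies of the loop body (for loop counter values $\ell = k_L(N-1), \ldots, k_L(N)-1$) are inserted so that they execute immediately after the loop body has been iterated $k_L(N-1)$ times. Then $\{\varphi(N)\}\;\mathsf{P}_N\;\{\psi(N)\}$ holds iff $\{\varphi(N)\}\;\mathsf{P}^p_N\;\{\psi(N)\}$ holds.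
   Context: Programs are generated by the grammar: statements are scalar assignments $v := E$, array assignments $A[E] := E$, conditionals, sequential composition, and non-nested loops $\mathbf{for}(\ell := 0; \ell < E; \ell := \ell+1)\{S\}$ whose bodies contain no loops; expressions are built from array reads, scalar variables, loop counters, integer constants and the parameter $N$ using $+,-,*,/$; Boolean conditions are relational comparisons of expressions combined by AND, OR, NOT. $N$ is a positive integer parameter. Each loop $L$ has a unique loop counter $\ell$, initialized to $0$ at the start of the loop and incremented by $1$ at the end of each iteration and not otherwise updated; its bound $E$ is an expression in $N$, and $k_L(N)$ denotes the number of iterations of $L$ in the program with parameter $N$. A Hoare triple $\{\alpha\}\;\mathsf{Q}\;\{\beta\}$ holds if every execution of $\mathsf{Q}$ from a state satisfying $\alpha$ ends in a state satisfying $\beta$. *)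

From Stdlib Require Import ZArith List.
Import ListNotations.
Open Scope Z_scope.

Definition var := nat.
Definition arr := nat.
Definition cnt := nat.

Inductive aexp : Type :=
  | ARead  : arr -> aexp -> aexp
  | AVar   : var -> aexp
  | ACnt   : cnt -> aexp
  | AConst : Z -> aexp
  | AN     : aexp
  | AAdd   : aexp -> aexp -> aexp
  | ASub   : aexp -> aexp -> aexp
  | AMul   : aexp -> aexp -> aexp
  | ADiv   : aexp -> aexp -> aexp.

Inductive relop : Type := RLt | RLe | RGt | RGe | REq | RNe.

Inductive bexp : Type :=
  | BRel : relop -> aexp -> aexp -> bexp
  | BAnd : bexp -> bexp -> bexp
  | BOr  : bexp -> bexp -> bexp
  | BNot : bexp -> bexp.

Inductive stmt : Type :=
  | SSkip   : stmt
  | SAssign : var -> aexp -> stmt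
  | SAStore : arr -> aexp -> aexp -> stmt
  | SIf     : bexp -> stmt -> stmt -> stmt
  | SSeq    : stmt -> stmt -> stmt
  | SFor    : cnt -> aexp -> stmt -> stmt
  | SIncr   : cnt -> stmt.                       (* l := l+1 ; only produced by
                                                    the peeling transformation *)

Record state : Type := mkState {
  st_var : var -> Z;
  st_arr : arr -> Z -> Z;
  st_cnt : cnt -> Z }.

Definition upd_var (s : state) (v : var) (z : Z) : state :=
  mkState (fun x => if Nat.eqb x v then z else st_var s x) (st_arr s) (st_cnt s).
Definition upd_arr (s : state) (a : arr) (i z : Z) : state :=
  mkState (st_var s)
    (fun b j => if Nat.eqb b a then (if Z.eqb j i then z else st_arr s b j)
                else st_arr s b j) (st_cnt s).
Definition upd_cnt (s : state) (l : cnt) (z : Z) : state :=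
  mkState (st_var s) (st_arr s) (fun x => if Nat.eqb x l then z else st_cnt s x).

Fixpoint aeval (N : Z) (s : state) (e : aexp) : Z :=
  match e with
  | ARead a i => st_arr s a (aeval N s i)
  | AVar v => st_var s v
  | ACnt l => st_cnt s l
  | AConst z => z
  | AN => N
  | AAdd e1 e2 => aeval N s e1 + aeval N s e2
  | ASub e1 e2 => aeval N s e1 - aeval N s e2
  | AMul e1 e2 => aeval N s e1 * aeval N s e2
  | ADiv e1 e2 => aeval N s e1 / aeval N s e2
  end.

Definition releval (r : relop) (x y : Z) : bool :=
  match r with
  | RLt => x <? y | RLe => x <=? y | RGt => y <? x | RGe => y <=? x
  | REq => x =? y | RNe => negb (x =? y)
  end.

Fixpoint beval (N : Z) (s : state) (b : bexp) : bool :=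
  match b with
  | BRel r e1 e2 => releval r (aeval N s e1) (aeval N s e2)
  | BAnd b1 b2 => beval N s b1 && beval N s b2
  | BOr b1 b2 => beval N s b1 || beval N s b2
  | BNot b1 => negb (beval N s b1)
  end.

Inductive exec (N : Z) : state -> stmt -> state -> Prop :=
  | E_Skip s : exec N s SSkip s
  | E_Assign s v e : exec N s (SAssign v e) (upd_var s v (aeval N s e))
  | E_AStore s a e1 e2 :
      exec N s (SAStore a e1 e2) (upd_arr s a (aeval N s e1) (aeval N s e2))
  | E_IfT s b s1 s2 s' : beval N s b = true -> exec N s s1 s' -> exec N s (SIf b s1 s2) s'
  | E_IfF s b s1 s2 s' : beval N s b = false -> exec N s s2 s' -> exec N s (SIf b s1 s2) s'
  | E_Seq s c1 c2 s1 s' : exec N s c1 s1 -> exec N s1 c2 s' -> exec N s (SSeq c1 c2) s'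
  | E_For s l e body s' :
      exec_loop N l e body (upd_cnt s l 0) s' -> exec N s (SFor l e body) s'
  | E_Incr s l : exec N s (SIncr l) (upd_cnt s l (st_cnt s l + 1))
with exec_loop (N : Z) : cnt -> aexp -> stmt -> state -> state -> Prop :=
  | L_Done l e body s :
      ~ (st_cnt s l < aeval N s e) -> exec_loop N l e body s s
  | L_Step l e body s s1 s' :
      st_cnt s l < aeval N s e ->
      exec N s body s1 ->
      exec_loop N l e body (upd_cnt s1 l (st_cnt s1 l + 1)) s' ->
      exec_loop N l e body s s'.

Definition hoare (N : Z) (alpha : state -> Prop) (Q : stmt) (beta : state -> Prop) : Prop :=
  forall s s', alpha s -> exec N s Q s' -> beta s'.

Fixpoint aexp_in_N (e : aexp) : Prop :=
  match e with
  | AConst _ | AN => True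
  | AAdd e1 e2 | ASub e1 e2 | AMul e1 e2 | ADiv e1 e2 => aexp_in_N e1 /\ aexp_in_N e2
  | _ => False
  end.

Fixpoint loop_free (c : stmt) : Prop :=
  match c with
  | SSkip | SAssign _ _ | SAStore _ _ _ => True
  | SIf _ c1 c2 | SSeq c1 c2 => loop_free c1 /\ loop_free c2
  | SFor _ _ _ | SIncr _ => False
  end.

Fixpoint wf_loops (c : stmt) : Prop :=
  match c with
  | SSkip | SAssign _ _ | SAStore _ _ _ => True
  | SIf _ c1 c2 | SSeq c1 c2 => wf_loops c1 /\ wf_loops c2
  | SFor _ e body => aexp_in_N e /\ loop_free body
  | SIncr _ => False
  end.

Fixpoint loops (c : stmt) : list (cnt * aexp) :=
  match c with
  | SIf _ c1 c2 | SSeq c1 c2 => loops c1 ++ loops c2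
  | SFor l e _ => [(l, e)]
  | _ => []
  end.

(* non-nested loops with bounds depending only on N, each loop with its own
   (unique) counter *)
Definition wf_prog (c : stmt) : Prop :=
  wf_loops c /\ NoDup (map fst (loops c)).

(* k_L(N): number of iterations of a loop with bound e (an expression in N)
   when the parameter has value N.  The bound does not depend on the state. *)
Definition empty_state : state := mkState (fun _ => 0) (fun _ _ => 0) (fun _ => 0).
Definition k_L (e : aexp) (N : Z) : nat := Z.to_nat (aeval N empty_state e).

Fixpoint substN1 (e : aexp) : aexp :=
  match e with
  | ARead a i => ARead a (substN1 i)
  | AN => ASub AN (AConst 1)
  | AAdd e1 e2 => AAdd (substN1 e1) (substN1 e2)
  | ASub e1 e2 => ASub (substN1 e1) (substN1 e2)
  | AMul e1 e2 => AMul (substN1 e1) (substN1 e2)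
  | ADiv e1 e2 => ADiv (substN1 e1) (substN1 e2)
  | e' => e'
  end.

Fixpoint unroll (n : nat) (l : cnt) (body : stmt) : stmt :=
  match n with
  | O => SSkip
  | S n' => SSeq (SSeq body (SIncr l)) (unroll n' l body)
  end.

Fixpoint peel (c : cnt -> nat) (p : stmt) : stmt :=
  match p with
  | SIf b c1 c2 => SIf b (peel c c1) (peel c c2)
  | SSeq c1 c2 => SSeq (peel c c1) (peel c c2)
  | SFor l e body => SSeq (SFor l (substN1 e) body) (unroll (c l) l body)
  | p' => p'
  end.

(* Loop bounds are expressions in N alone and loop bodies never modify loop
   counters, so a loop whose bound evaluates to k runs its body exactly k times,
   each run followed by the counter increment.  Splitting the k_L(N) runs of
   every loop into k_L(N-1) runs (the shortened loop) followed by c_L runs (the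
   peeled copies) shows that P_N and its peeled version have the same
   input-output relation, hence satisfy the same Hoare triples. *)
From Stdlib Require Import ZArith List Lia.
Open Scope Z_scope.

Lemma aeval_in_N_state_indep N s e :
  aexp_in_N e -> aeval N s e = aeval N empty_state e.
Proof. induction e; simpl; intuition congruence. Qed.

Lemma aeval_substN1 N s e :
  aexp_in_N e -> aeval N s (substN1 e) = aeval (N - 1) empty_state e.
Proof. induction e; simpl; intuition congruence. Qed.

Lemma exec_loop_free_cnt N s c s' :
  exec N s c s' -> loop_free c -> st_cnt s' = st_cnt s.
Proof. intros H; induction H; simpl; intuition congruence. Qed.

Lemma st_cnt_upd_cnt_same s l z : st_cnt (upd_cnt s l z) l = z.
Proof. simpl. now rewrite Nat.eqb_refl. Qed.

Section BodyIterations.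

Variables (N : Z) (l : cnt) (body : stmt).

Fixpoint iter_body (n : nat) (s s' : state) : Prop :=
  match n with
  | O => s = s'
  | S n' => exists s1, exec N s body s1 /\
              iter_body n' (upd_cnt s1 l (st_cnt s1 l + 1)) s'
  end.

Lemma iter_body_add a b s s' :
  iter_body (a + b) s s' <->
  exists sm, iter_body a s sm /\ iter_body b sm s'.
Proof.
  revert s; induction a as [|a IH]; intros s; simpl; split.
  - intros H; now exists s.
  - now intros [sm [<- H]].
  - intros [s1 [H1 H2]]. apply IH in H2. destruct H2 as [sm [H2 H3]].
    exists sm. split; [exists s1|]; auto.
  - intros [sm [[s1 [H1 H2]] H3]]. exists s1. split; [|apply IH; exists sm]; auto.
Qed.

Lemma exec_unroll_iff_iter_body n s s' :
  exec N s (unroll n l body) s' <-> iter_body n s s'.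
Proof.
  revert s; induction n as [|n IH]; intros s; simpl; split.
  - intros H; now inversion H.
  - intros <-; constructor.
  - intros H; inversion H as [| | | | |? ? ? s2 ? Hbi Hrest| |]; subst.
    inversion Hbi as [| | | | |? ? ? s1 ? Hb Hi| |]; subst.
    inversion Hi; subst.
    exists s1. split; [|apply IH]; auto.
  - intros [s1 [H1 H2]]. econstructor; [econstructor; [exact H1|constructor]|].
    now apply IH.
Qed.

Hypothesis body_loop_free : loop_free body.

Lemma exec_loop_iff_iter_body e v :
  (forall s, aeval N s e = v) ->
  forall n m s s', st_cnt s l = Z.of_nat m -> Z.to_nat v = (m + n)%nat ->
  exec_loop N l e body s s' <-> iter_body n s s'.
Proof.
  intros Hv n; induction n as [|n IH]; intros m s s' Hm Hn; simpl.
  - split.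
    + intros H; inversion H; subst; auto.
      rewrite Hv, Hm in *; lia.
    + intros <-. apply L_Done. rewrite Hv, Hm; lia.
  - assert (Hstep : forall s1, exec N s body s1 ->
              st_cnt (upd_cnt s1 l (st_cnt s1 l + 1)) l = Z.of_nat (S m)).
    { intros s1 Hb. rewrite st_cnt_upd_cnt_same,
        (exec_loop_free_cnt _ _ _ _ Hb body_loop_free), Hm; lia. }
    split.
    + intros H; inversion H as [? ? ? ? Hstop|? ? ? ? s1 ? ? Hb Hrest]; subst.
      * rewrite Hv, Hm in Hstop; lia.
      * exists s1. split; auto. apply (IH (S m)); auto; lia.
    + intros [s1 [Hb Hrest]]. apply L_Step with s1; auto.
      * rewrite Hv, Hm; lia.
      * apply (IH (S m)); auto; lia.
Qed.

Lemma exec_for_iff_iter_body e v :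
  (forall s, aeval N s e = v) ->
  forall s s', exec N s (SFor l e body) s' <->
               iter_body (Z.to_nat v) (upd_cnt s l 0) s'.
Proof.
  intros Hv s s'.
  rewrite <- (exec_loop_iff_iter_body e v Hv _ 0) by
    (rewrite ?st_cnt_upd_cnt_same; reflexivity).
  split; intros H; [inversion H; subst; assumption | now constructor].
Qed.

Lemma exec_for_iff_peeled e n :
  aexp_in_N e -> k_L e N = (k_L e (N - 1) + n)%nat ->
  forall s s', exec N s (SFor l e body) s' <->
               exec N s (SSeq (SFor l (substN1 e) body) (unroll n l body)) s'.
Proof.
  intros He Hk s s'.
  rewrite (exec_for_iff_iter_body e _ (fun s0 => aeval_in_N_state_indep N s0 e He)).
  fold (k_L e N). rewrite Hk, iter_body_add.
  split.
  - intros [sm [H1 H2]]. apply E_Seq with sm.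
    + apply (exec_for_iff_iter_body _ _ (fun s0 => aeval_substN1 N s0 e He)), H1.
    + apply exec_unroll_iff_iter_body, H2.
  - intros H; inversion H as [| | | | |? ? ? sm ? H1 H2| |]; subst.
    exists sm. split.
    + apply (exec_for_iff_iter_body _ _ (fun s0 => aeval_substN1 N s0 e He)), H1.
    + apply exec_unroll_iff_iter_body, H2.
Qed.

End BodyIterations.

Lemma exec_peel_iff (c : cnt -> nat) N P :
  wf_loops P ->
  (forall l e, In (l, e) (loops P) -> k_L e N = (k_L e (N - 1) + c l)%nat) ->
  forall s s', exec N s P s' <-> exec N s (peel c P) s'.
Proof.
  induction P as [| | |b P1 IH1 P2 IH2|P1 IH1 P2 IH2|l e body _| ];
    simpl; intros Hwf Hk s s'; try tauto.
  - destruct Hwf as [W1 W2].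
    specialize (IH1 W1 (fun l e H => Hk l e (in_or_app _ _ _ (or_introl H)))).
    specialize (IH2 W2 (fun l e H => Hk l e (in_or_app _ _ _ (or_intror H)))).
    split; intros H; inversion H; subst;
      [apply E_IfT|apply E_IfF|apply E_IfT|apply E_IfF];
      auto; [apply IH1|apply IH2|apply IH1|apply IH2]; assumption.
  - destruct Hwf as [W1 W2].
    specialize (IH1 W1 (fun l e H => Hk l e (in_or_app _ _ _ (or_introl H)))).
    specialize (IH2 W2 (fun l e H => Hk l e (in_or_app _ _ _ (or_intror H)))).
    split; intros H; inversion H; subst;
      (apply E_Seq with s1; [apply IH1|apply IH2]; assumption).
  - destruct Hwf as [He Hbody].
    exact (exec_for_iff_peeled N l body Hbody e (c l) He (Hk l e (or_introl eq_refl)) s s').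
Qed.

Lemma hoare_iff_of_exec_iff N alpha beta Q Q' :
  (forall s s', exec N s Q s' <-> exec N s Q' s') ->
  hoare N alpha Q beta <-> hoare N alpha Q' beta.
Proof. intros E; unfold hoare; split; intros H s s' Hs Hx; apply (H s s' Hs), E, Hx. Qed.

Theorem lemma1 (P : stmt) (phi psi : Z -> state -> Prop) (c : cnt -> nat) :
  wf_prog P ->
  (forall l e, In (l, e) (loops P) ->
     forall N : Z, 0 < N -> k_L e N = (k_L e (N - 1) + c l)%nat) ->
  forall N : Z, 0 < N ->
    (hoare N (phi N) P (psi N) <-> hoare N (phi N) (peel c P) (psi N)).
Proof.
  intros [Hwf _] Hk N HN.
  apply hoare_iff_of_exec_iff, exec_peel_iff; auto.
Qed.
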